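(* Let $f\in\mathcal{F}_k$. Then the set $\mathcal{V}=\{-1,0,1\}^k$ is representative for the Lovász hinge $L^f$, i.e., for every $p\in\Delta_\mathcal{Y}$, $\arg\min_{u\in\mathbb{R}^k}\sum_{y\in\mathcal{Y}}p_yL^f(u,y)\cap\mathcal{V}\neq\emptyset$.
   Context: $[k]=\{1,\dots,k\}$, $\mathcal{Y}=\{-1,1\}^k$, $\Delta_\mathcal{Y}$ the probability distributions on $\mathcal{Y}$. $u\odot u'$ entrywise product, $\mathbbm{1}$ all-ones vector, $(x)_+$ entrywise positive part. $\mathcal{F}_k$: set functions $f:2^{[k]}\to\mathbb{R}$ that are submodular ($f(S)+f(T)\ge f(S\cup T)+f(S\cap T)$), increasing ($f(S\cup T)\ge f(S)$ for disjoint $S,T$) and normalized ($f(\emptyset)=0$). Lovász extension $F(x)=\max_\pi\sum_{i=1}^k x_{\pi_i}(f(\{\pi_1,\dots,\pi_i\})-f(\{\pi_1,\dots,\pi_{i-1}\}))$ for $x\in\mathbb{R}^k_+$ (max over permutations of $[k]$); Lovász hinge $L^f(u,y)=F((\mathbbm{1}-u\odot y)_+)$. *)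

From mathcomp Require Import all_boot all_order all_algebra all_fingroup.
From mathcomp Require Import reals.
Set Implicit Arguments. Unset Strict Implicit. Unset Printing Implicit Defensive.
Import Order.TTheory GRing.Theory Num.Theory.
Local Open Scope ring_scope.

Section Defs.
Variables (R : realType) (k : nat).

Definition submodular (f : {set 'I_k} -> R) : Prop :=
  forall S T : {set 'I_k}, f (S :|: T) + f (S :&: T) <= f S + f T.
Definition increasing (f : {set 'I_k} -> R) : Prop :=
  forall S T : {set 'I_k}, [disjoint S & T] -> f S <= f (S :|: T).
Definition normalized (f : {set 'I_k} -> R) : Prop := f set0 = 0.
Definition in_Fk (f : {set 'I_k} -> R) : Prop :=
  [/\ submodular f, increasing f & normalized f].

Definition lovasz_term (f : {set 'I_k} -> R) (x : 'I_k -> R) (s : 'S_k) : R :=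
  \sum_(i < k) x (s i) *
    (f [set s j | j in [pred j : 'I_k | (j <= i)%N]]
     - f [set s j | j in [pred j : 'I_k | (j < i)%N]]).

Definition lovasz_ext (f : {set 'I_k} -> R) (x : 'I_k -> R) : R :=
  \big[Num.max/lovasz_term f x 1%g]_(s : 'S_k) lovasz_term f x s.

(* labels y in {-1,1}^k, encoded by booleans: true = 1, false = -1 *)
Definition sgn (b : bool) : R := if b then 1 else -1.

Definition lovasz_hinge (f : {set 'I_k} -> R) (u : 'I_k -> R)
    (y : {ffun 'I_k -> bool}) : R :=
  lovasz_ext f (fun i => Num.max 0 (1 - u i * sgn (y i))).

Definition exp_loss (f : {set 'I_k} -> R) (p : {ffun {ffun 'I_k -> bool} -> R})
    (u : 'I_k -> R) : R :=
  \sum_(y : {ffun 'I_k -> bool}) p y * lovasz_hinge f u y.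

Definition is_distribution (p : {ffun {ffun 'I_k -> bool} -> R}) : Prop :=
  (forall y, 0 <= p y) /\ \sum_y p y = 1.

Definition in_V (v : 'I_k -> R) : Prop := forall i, v i \in [:: -1; 0; 1].
End Defs.

(* Clipping u into the box [-1,1]^k never increases the loss, since the hinge argument
   only decreases and the Lovasz extension of an increasing f is monotone.  In the box,
   let a be the largest of the values |u_i| lying in (0,1) and b the next smaller one (or
   0).  Moving all coordinates with |u_i| = a to modulus t, for t in [b,1], does not
   change the order of the entries of 1 - u * y, for any label y.  For submodular f the
   Lovasz extension is given by the greedy formula of any sorting permutation, hence is
   additive on commonly sorted vectors; so u is a convex combination of its two moves
   t = 1 and t = b, with the same convex combination of losses.  The better of the two
   has one fractional modulus fewer, and induction ends in {-1,0,1}^k, which is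
   finite. *)

From mathcomp Require Import all_boot all_order all_algebra all_fingroup.
From mathcomp Require Import reals.
From mathcomp Require Import ring lra.
Import Order.TTheory GRing.Theory Num.Theory.
Local Open Scope ring_scope.
Set Implicit Arguments. Unset Strict Implicit. Unset Printing Implicit Defensive.

Section LovaszExtension.
Variables (R : realType) (k : nat) (f : {set 'I_k} -> R).

Definition prefix (s : 'S_k) (n : nat) : {set 'I_k} :=
  [set s j | j in [pred j : 'I_k | (j < n)%N]].

Definition marginal (s : 'S_k) (i : 'I_k) : R := f (prefix s i.+1) - f (prefix s i).

Lemma lovasz_termE x s : lovasz_term f x s = \sum_(i < k) x (s i) * marginal s i.
Proof. by []. Qed.

Lemma mem_prefix s n y : (y \in prefix s n) = ((s^-1)%g y < n)%N.
Proof.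
apply/imsetP/idP => [[j]|ltyn]; first by rewrite inE => ltjn ->; rewrite permK.
by exists ((s^-1)%g y); rewrite ?inE ?permKV.
Qed.

Lemma prefix0 s : prefix s 0 = set0.
Proof. by apply/setP => y; rewrite mem_prefix in_set0. Qed.

Lemma prefix_full s : prefix s k = setT.
Proof. by apply/setP => y; rewrite mem_prefix in_setT ltn_ord. Qed.

Lemma prefixS s (i : 'I_k) : prefix s i.+1 = s i |: prefix s i.
Proof.
apply/setP => y; rewrite in_setU1 !mem_prefix ltnS leq_eqVlt; congr (_ || _).
by apply/eqP/eqP => [/val_inj <-|->]; rewrite ?permKV ?permK.
Qed.

Lemma prefix_subset s m n : (m <= n)%N -> prefix s m \subset prefix s n.
Proof.
by move=> lemn; apply/subsetP => y; rewrite !mem_prefix => /leq_trans; apply.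
Qed.

Hypothesis submod_f : submodular f.
Hypothesis incr_f : increasing f.

Lemma marginal_ge0 s i : 0 <= marginal s i.
Proof.
rewrite subr_ge0 prefixS setUC; apply: incr_f.
by rewrite disjoint_sym disjoints1 mem_prefix permK ltnn.
Qed.

Definition gain (s : 'S_k) (T : {set 'I_k}) : R :=
  \sum_(i < k | s i \in T) marginal s i.

Lemma gain_telescope s T :
  f T - f set0 = \sum_(i < k) (f (prefix s i.+1 :&: T) - f (prefix s i :&: T)).
Proof.
rewrite -(big_mkord xpredT (fun i => f (prefix s i.+1 :&: T) - f (prefix s i :&: T))).
by rewrite telescope_sumr // prefix_full prefix0 setTI set0I.
Qed.

Lemma prefixSI_notin (s : 'S_k) (i : 'I_k) (T : {set 'I_k}) :
  s i \notin T -> prefix s i.+1 :&: T = prefix s i :&: T.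
Proof.
move=> siT; rewrite prefixS setIUl (_ : [set s i] :&: T = set0) ?set0U //.
by apply/setP => y; rewrite !inE; case: eqP => // ->; rewrite (negbTE siT).
Qed.

Lemma gain_le s T : gain s T <= f T - f set0.
Proof.
rewrite (gain_telescope s) /gain big_mkcond /=; apply: ler_sum => i _.
case: ifPn => [siT|/prefixSI_notin->]; last by rewrite subrr.
have := submod_f (prefix s i) (prefix s i.+1 :&: T).
have -> : prefix s i :|: prefix s i.+1 :&: T = prefix s i.+1.
  rewrite setUIr (setUidPr (prefix_subset _ (leqnSn _))); apply/setIidPl.
  by rewrite prefixS subUset sub1set !inE siT orbT subsetUl.
rewrite setIA (setIidPl (prefix_subset _ (leqnSn _))) /marginal; lra.
Qed.

Lemma gain_prefix s n : gain s (prefix s n) = f (prefix s n) - f set0.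
Proof.
rewrite (gain_telescope s) /gain big_mkcond /=; apply: eq_bigr => i _.
case: ifPn => [|/prefixSI_notin->]; last by rewrite subrr.
rewrite mem_prefix permK => ltin.
by rewrite !(setIidPl (prefix_subset _ _)) // ltnW.
Qed.

Definition sorts_desc (sg : 'S_k) (x : 'I_k -> R) : Prop :=
  forall i j : 'I_k, (i <= j)%N -> x (sg j) <= x (sg i).

Definition entry_at (sg : 'S_k) (x : 'I_k -> R) (n : nat) : R :=
  if insub n is Some i then x (sg i) else 0.

Lemma entry_at_ord sg x (i : 'I_k) : entry_at sg x i = x (sg i).
Proof. by rewrite /entry_at valK. Qed.

Lemma entry_at_k sg x : entry_at sg x k = 0.
Proof. by rewrite /entry_at insubN ?ltnn. Qed.

Lemma value_layers sg x y :
  x y = \sum_(m < k | y \in prefix sg m.+1) (entry_at sg x m - entry_at sg x m.+1).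
Proof.
set j := (sg^-1)%g y.
rewrite (eq_bigl (fun m : 'I_k => true && (j <= m)%N)) => [|m]; last first.
  by rewrite mem_prefix ltnS.
rewrite -(big_geq_mkord j k xpredT (fun n => entry_at sg x n - entry_at sg x n.+1)).
rewrite (telescope_sumr_eq (fun n => - entry_at sg x n)); last first.
- by move=> m _; rewrite opprK addrC.
- exact: ltnW.
by rewrite entry_at_k oppr0 sub0r opprK entry_at_ord permKV.
Qed.

Lemma lovasz_term_layers sg x t :
  lovasz_term f x t =
  \sum_(m < k) (entry_at sg x m - entry_at sg x m.+1) * gain t (prefix sg m.+1).
Proof.
rewrite lovasz_termE; under eq_bigr do rewrite (value_layers sg x) mulr_suml.
by rewrite (exchange_big_dep xpredT) //=; apply: eq_bigr => m _; rewrite /gain mulr_sumr.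
Qed.

(* Edmonds' greedy argument: when sg sorts x, all layer weights but the last are
   nonnegative, and the last layer is the full set, on which every gain agrees. *)
Lemma lovasz_term_le_sorted sg x t :
  sorts_desc sg x -> lovasz_term f x t <= lovasz_term f x sg.
Proof.
move=> sorted_x; rewrite !(lovasz_term_layers sg); apply: ler_sum => m _.
rewrite gain_prefix; case: (ltnP m.+1 k) => [ltm1k|lekm1].
  apply: ler_wpM2l; last exact: gain_le.
  rewrite entry_at_ord -[m.+1]/(nat_of_ord (Ordinal ltm1k)) entry_at_ord subr_ge0.
  exact: sorted_x.
have -> : m.+1 = k by apply/eqP; rewrite eqn_leq lekm1 ltn_ord.
by rewrite prefix_full -(prefix_full t) gain_prefix.
Qed.

Lemma eq_lovasz_ext x x' : x =1 x' -> lovasz_ext f x = lovasz_ext f x'.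
Proof.
move=> eq_x; have eq_term s : lovasz_term f x s = lovasz_term f x' s.
  by rewrite !lovasz_termE; apply: eq_bigr => i _; rewrite eq_x.
by rewrite /lovasz_ext eq_term; apply: eq_bigr => s _; apply: eq_term.
Qed.

Lemma lovasz_term_le_ext x s : lovasz_term f x s <= lovasz_ext f x.
Proof. exact: le_bigmax. Qed.

Lemma lovasz_ext_sorted sg x : sorts_desc sg x -> lovasz_ext f x = lovasz_term f x sg.
Proof.
move=> sorted_x; apply/le_anti; rewrite lovasz_term_le_ext andbT.
by apply: bigmax_le => [|s _]; apply: lovasz_term_le_sorted.
Qed.

Lemma lovasz_ext_mono x x' :
  (forall i, x i <= x' i) -> lovasz_ext f x <= lovasz_ext f x'.
Proof.
move=> le_xx'; have le_term s : lovasz_term f x s <= lovasz_ext f x'.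
  apply: le_trans (lovasz_term_le_ext x' s); rewrite !lovasz_termE.
  by apply: ler_sum => i _; apply: ler_wpM2r; [exact: marginal_ge0|exact: le_xx'].
exact: bigmax_le.
Qed.

Lemma lovasz_ext_comonotone sg x x' (a b : R) :
  sorts_desc sg x -> sorts_desc sg x' -> 0 <= a -> 0 <= b ->
  lovasz_ext f (fun i => a * x i + b * x' i) = a * lovasz_ext f x + b * lovasz_ext f x'.
Proof.
move=> sorted_x sorted_x' a_ge0 b_ge0.
have sorted_comb : sorts_desc sg (fun i => a * x i + b * x' i).
  by move=> i j leij; rewrite lerD // ler_wpM2l // ?sorted_x ?sorted_x'.
rewrite !(@lovasz_ext_sorted sg) //.
rewrite !lovasz_termE !mulr_sumr -big_split; apply: eq_bigr => i _ /=; ring.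
Qed.

Lemma exists_sorting_perm x : exists sg, sorts_desc sg x.
Proof.
pose geq_x := [rel i j : 'I_k | x j <= x i].
have geq_x_trans : transitive geq_x by move=> i j l /= lexij /le_trans; apply.
have sorted_s := sort_sorted (fun i j => le_total (x j) (x i)) (enum 'I_k).
set s := sort geq_x _ in sorted_s.
have size_s : size s = k by rewrite size_sort size_enum_ord.
have nth_inj : injective (fun i : 'I_k => nth i s i).
  move=> i j; rewrite (set_nth_default i j) ?size_s // => /eqP.
  by rewrite nth_uniq ?size_s ?sort_uniq ?enum_uniq // => /eqP/val_inj.
exists (perm nth_inj) => i j leij; rewrite !permE /= (set_nth_default i j) ?size_s //.
by apply: (sorted_leq_nth geq_x_trans (fun l => lexx (x l))); rewrite // inE size_s.
Qed.

End LovaszExtension.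

Section LevelScaling.
Variable R : realFieldType.

Definition scale_level (a t w : R) : R := if `|w| == a then t / a * w else w.

Lemma normr_scale_level (a t w : R) :
  0 < a -> 0 <= t -> `|scale_level a t w| = if `|w| == a then t else `|w|.
Proof.
move=> a_gt0 t_ge0; rewrite /scale_level; case: eqP => // eq_wa.
by rewrite normrM eq_wa ger0_norm ?divfK ?gt_eqF // divr_ge0 // ltW.
Qed.

Lemma scale_levelMsign (a t w s : R) :
  `|s| = 1 -> scale_level a t w * s = scale_level a t (w * s).
Proof.
move=> norm_s; rewrite /scale_level normrM norm_s mulr1.
by case: eqP => // _; rewrite mulrA.
Qed.

Lemma scale_level_cases (a b t w : R) :
  0 <= b -> b < a -> `|w| <= b \/ `|w| = a \/ `|w| = 1 ->
  [\/ w = a /\ scale_level a t w = t, w = - a /\ scale_level a t w = - t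
     | ((- b <= w /\ w <= b) \/ w = 1 \/ w = - 1) /\ scale_level a t w = w].
Proof.
move=> b_ge0 ltba w_levels; have a_neq0 : a != 0 by rewrite gt_eqF //; lra.
rewrite /scale_level; case: eqP => [eq_wa|neq_wa].
  have [w_ge0|w_lt0] := lerP 0 w.
    by apply: Or31; rewrite -eq_wa ger0_norm // in a_neq0 *; rewrite divfK.
  apply: Or32; rewrite -eq_wa ltr0_norm // in a_neq0 *.
  by rewrite opprK invrN mulrN mulNr divfK // -oppr_eq0.
apply: Or33; split=> //; case: w_levels => [|[//|]].
  by rewrite ler_norml => /andP[]; left.
move=> norm_w1; have [w_ge0|w_lt0] := lerP 0 w.
  by right; left; rewrite -norm_w1 ger0_norm.
by right; right; rewrite -norm_w1 ltr0_norm // opprK.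
Qed.

Lemma scale_level_mono (a b t w w' : R) :
  0 <= b -> b < a -> a < 1 -> b <= t -> t <= 1 ->
  `|w| <= b \/ `|w| = a \/ `|w| = 1 -> `|w'| <= b \/ `|w'| = a \/ `|w'| = 1 ->
  w <= w' -> scale_level a t w <= scale_level a t w'.
Proof.
move=> b_ge0 ltba lta1 lebt let1 /(scale_level_cases t b_ge0 ltba) cases_w.
move=> /(scale_level_cases t b_ge0 ltba) cases_w'.
case: cases_w => [[->->]|[->->]|[+ ->]]; case: cases_w' => [[->->]|[->->]|[+ ->]];
  lra.
Qed.

End LevelScaling.

Section LovaszHinge.
Variables (R : realType) (k : nat) (f : {set 'I_k} -> R).
Variable p : {ffun {ffun 'I_k -> bool} -> R}.
Hypothesis submod_f : submodular f.
Hypothesis incr_f : increasing f.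
Hypothesis p_ge0 : forall y, 0 <= p y.

Definition hinge_arg (u : 'I_k -> R) (y : {ffun 'I_k -> bool}) (i : 'I_k) : R :=
  Num.max 0 (1 - u i * sgn R (y i)).

Lemma exp_lossE u : exp_loss f p u = \sum_y p y * lovasz_ext f (hinge_arg u y).
Proof. by []. Qed.

Lemma eq_exp_loss u u' : u =1 u' -> exp_loss f p u = exp_loss f p u'.
Proof.
move=> eq_u; rewrite !exp_lossE; apply: eq_bigr => y _; congr (_ * _).
by apply: eq_lovasz_ext => i; rewrite /hinge_arg eq_u.
Qed.

Lemma normr_sgn b : `|sgn R b| = 1.
Proof. by case: b; rewrite ?normrN normr1. Qed.

Definition in_box (u : 'I_k -> R) : Prop := forall i, `|u i| <= 1.

Lemma hinge_arg_box u y :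
  in_box u -> hinge_arg u y =1 (fun i => 1 - u i * sgn R (y i)).
Proof.
move=> box_u i; apply/max_idPr; rewrite subr_ge0 (le_trans (ler_norm _)) //.
by rewrite normrM normr_sgn mulr1 box_u.
Qed.

Definition clip (u : 'I_k -> R) (i : 'I_k) : R :=
  if u i < -1 then -1 else if 1 < u i then 1 else u i.

Lemma in_box_clip u : in_box (clip u).
Proof.
move=> i; rewrite /clip ler_norml.
by case: ltP => lt_u1; case: ltP => lt_1u; apply/andP; split; lra.
Qed.

Lemma exp_loss_clip u : exp_loss f p (clip u) <= exp_loss f p u.
Proof.
rewrite !exp_lossE; apply: ler_sum => y _; apply: ler_wpM2l => //.
apply: lovasz_ext_mono => // i; rewrite /hinge_arg /clip ge_max le_max lexx /= le_max.
by case: (y i); rewrite /sgn ?mulr1 ?mulrN1; case: ltP => lt_u1; case: ltP => lt_1u;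
  apply/orP; lra.
Qed.

Definition vertex (w : {ffun 'I_k -> 'I_3}) (i : 'I_k) : R := (w i)%:R - 1.

Lemma vertex_in_V w : in_V (vertex w).
Proof.
move=> i; rewrite /vertex !inE; case: (w i) => [[|[|[|m]]] //= _].
- by rewrite sub0r eqxx.
- by rewrite subrr eqxx orbT.
- by rewrite -natr1 addrK eqxx !orbT.
Qed.

Definition fractional (u : 'I_k -> R) (i : 'I_k) : bool := (0 < `|u i|) && (`|u i| < 1).

Lemma vertex_of_nonfractional u :
  in_box u -> (forall i, ~~ fractional u i) -> exists w, vertex w =1 u.
Proof.
move=> box_u nonfrac.
have u_vals i : u i = -1 \/ u i = 0 \/ u i = 1.
  have := box_u i; have := nonfrac i; rewrite negb_and -!leNgt.
  have [u_ge0|u_lt0] := lerP 0 (u i).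
    by rewrite ger0_norm // => /orP[] ? ?; lra.
  by rewrite ltr0_norm // => /orP[] ? ?; lra.
exists [ffun i => inord ((u i != -1) + (u i == 1))] => i.
rewrite /vertex ffunE inordK; last by case: (_ != _); case: (_ == _).
have neq_m11 : (1 : R) != -1 by apply/eqP; lra.
case: (u_vals i) => [|[|]] ->.
- by rewrite eqxx eq_sym (negbTE neq_m11) sub0r.
- by rewrite eq_sym oppr_eq0 oner_eq0 eq_sym oner_eq0 subrr.
- by rewrite eqxx (negbTE neq_m11) natrD addrK.
Qed.

Definition rescale (a t : R) (u : 'I_k -> R) (i : 'I_k) : R := scale_level a t (u i).

Lemma in_box_rescale u a t :
  in_box u -> 0 < a -> 0 <= t -> t <= 1 -> in_box (rescale a t u).
Proof. by move=> box_u a_gt0 t_ge0 le_t1 i; rewrite normr_scale_level //; case: eqP. Qed.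

Lemma exp_loss_split_level u a b :
  in_box u -> 0 <= b -> b < a -> a < 1 ->
  (forall j, `|u j| <= b \/ `|u j| = a \/ `|u j| = 1) ->
  exists2 lam, 0 <= lam <= 1 &
  exp_loss f p u =
    lam * exp_loss f p (rescale a 1 u) + (1 - lam) * exp_loss f p (rescale a b u).
Proof.
move=> box_u b_ge0 lt_ba lt_a1 levels_u; pose lam := (a - b) / (1 - b).
have a_gt0 : 0 < a by lra.
have lam_ge0 : 0 <= lam by rewrite divr_ge0 //; lra.
have lam_le1 : lam <= 1 by rewrite ler_pdivrMr ?mul1r; lra.
exists lam; first by rewrite lam_ge0 lam_le1.
have box_t t : b <= t -> t <= 1 -> in_box (rescale a t u).
  by move=> le_bt le_t1; apply: in_box_rescale => //; lra.
rewrite !exp_lossE !mulr_sumr -big_split; apply: eq_bigr => y _ /=.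
have [sg sorted_u] := exists_sorting_perm (hinge_arg u y).
have sorted_t t : b <= t -> t <= 1 -> sorts_desc sg (hinge_arg (rescale a t u) y).
  move=> le_bt le_t1 i j le_ij; have := sorted_u i j le_ij.
  rewrite !(hinge_arg_box y box_u) !(hinge_arg_box y (box_t _ le_bt le_t1)).
  rewrite /rescale !scale_levelMsign ?normr_sgn // !lerD2l !lerN2 => le_uij.
  by apply: (scale_level_mono (b := b)) => //; rewrite normrM normr_sgn mulr1.
(* u = lam * rescale a 1 u + (1 - lam) * rescale a b u, all sorted by sg. *)
have le_b1 : b <= 1 by lra.
have box_1 := box_t 1 le_b1 (lexx 1).
have box_b := box_t b (lexx b) le_b1.
rewrite (@eq_lovasz_ext _ _ _ _ (fun i => lam * hinge_arg (rescale a 1 u) y i +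
                                          (1 - lam) * hinge_arg (rescale a b u) y i)).
  rewrite (lovasz_ext_comonotone submod_f (sorted_t 1 le_b1 (lexx 1))
                                          (sorted_t b (lexx b) le_b1)) ?subr_ge0 //.
  ring.
move=> i; rewrite !(hinge_arg_box y box_u) (hinge_arg_box y box_1) (hinge_arg_box y box_b).
rewrite /rescale /scale_level; case: eqP => _; last ring.
rewrite /lam; field; apply/andP; split; apply/eqP; lra.
Qed.

(* The size of l bounds the number of distinct fractional moduli: the induction measure. *)
Definition levels_in (u : 'I_k -> R) (l : seq R) : Prop :=
  forall i, fractional u i -> `|u i| \in l.

Lemma top_two_levels u l :
  in_box u -> levels_in u l -> (exists i, fractional u i) ->
  exists a b, [/\ 0 <= b < a, a < 1, a \in l, (0 < b -> b \in l)
                & forall j, `|u j| <= b \/ `|u j| = a \/ `|u j| = 1].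
Proof.
move=> box_u levels_u [i0 frac_i0].
have [i frac_i max_i] := arg_maxP (fun i => `|u i|) frac_i0.
set a := `|u i| in frac_i max_i *; have /andP[a_gt0 lt_a1] := frac_i.
pose b := \big[Num.max/0]_(j | `|u j| < a) `|u j|.
have b_ge0 : 0 <= b := bigmax_ge_id _ _ _ _.
have lt_ba : b < a by apply/bigmax_ltP.
exists a, b; split => //; first by rewrite b_ge0.
- exact: levels_u.
- move=> b_gt0; case: (boolP [exists j, `|u j| < a]) => [/existsP[j lt_ja]|/existsPn no_j].
    have [j' lt_j'a eq_b] := eq_bigmax j (fun j => `|u j| < a) (fun j => `|u j|) lt_ja
      (fun j _ => normr_ge0 (u j)).
    rewrite /b eq_b in b_gt0 *; apply: levels_u; rewrite /fractional b_gt0.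
    exact: lt_trans lt_j'a lt_a1.
  by move: b_gt0; rewrite /b bigmax_eq_id ?ltxx // => j; rewrite (negbTE (no_j j)).
- move=> j; case: (ltrgtP `|u j| a) => [lt_ja|lt_aj|->]; last by right; left.
    by left; apply: le_bigmax_cond.
  have : ~~ fractional u j by apply/negP => /max_i /=; rewrite leNgt lt_aj.
  by rewrite negb_and -!leNgt => /orP[] ?; have := box_u j; lra.
Qed.

Lemma levels_in_rescale u l a t :
  levels_in u l -> 0 < a -> 0 <= t -> t != a -> (0 < t < 1 -> t \in l) ->
  levels_in (rescale a t u) (rem a l).
Proof.
move=> levels_u a_gt0 t_ge0 neq_ta t_in_l i; rewrite /fractional normr_scale_level //.
case: eqP => [_ /t_in_l|/eqP neq_ua frac_i]; apply: rem_mem => //.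
exact: levels_u.
Qed.

Lemma exists_vertex_le_levels u l :
  in_box u -> levels_in u l -> exists w, exp_loss f p (vertex w) <= exp_loss f p u.
Proof.
have [n] := ubnP (size l); elim: n => // n IHn in u l *.
rewrite ltnS => size_l box_u levels_u.
have [/existsP frac_u|/existsPn nonfrac] := boolP [exists i, fractional u i]; last first.
  have [w eq_wu] := vertex_of_nonfractional box_u nonfrac.
  by exists w; rewrite (eq_exp_loss eq_wu).
have [a [b [/andP[b_ge0 lt_ba] lt_a1 a_in_l b_in_l levels_ab]]] :=
  top_two_levels box_u levels_u frac_u.
have a_gt0 : 0 < a by lra.
have size_rem : (size (rem a l) < n)%N.
  by rewrite size_rem // prednK //; case: (l) a_in_l.
have levels_1 : 0 < (1 : R) < 1 -> 1 \in l by rewrite ltxx andbF.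
have levels_b : 0 < b < 1 -> b \in l by case/andP => /b_in_l.
have [w1 le_w1] := IHn (rescale a 1 u) (rem a l) size_rem
  (in_box_rescale box_u a_gt0 ler01 (lexx 1))
  (levels_in_rescale levels_u a_gt0 ler01 (negbT (gt_eqF lt_a1)) levels_1).
have [wb le_wb] := IHn (rescale a b u) (rem a l) size_rem
  (in_box_rescale box_u a_gt0 b_ge0 (ltW (lt_trans lt_ba lt_a1)))
  (levels_in_rescale levels_u a_gt0 b_ge0 (negbT (lt_eqF lt_ba)) levels_b).
have [lam /andP[lam_ge0 lam_le1] ->] :=
  exp_loss_split_level box_u b_ge0 lt_ba lt_a1 levels_ab.
have [le_1b|lt_b1] := lerP (exp_loss f p (rescale a 1 u)) (exp_loss f p (rescale a b u)).
  by exists w1; apply: le_trans le_w1 _; nra.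
by exists wb; apply: le_trans le_wb _; nra.
Qed.

Lemma exists_vertex_le u : exists w, exp_loss f p (vertex w) <= exp_loss f p u.
Proof.
have [w le_w] := @exists_vertex_le_levels (clip u) [seq `|clip u i| | i <- enum 'I_k]
  (in_box_clip u) (fun i _ => map_f _ (mem_enum _ i)).
by exists w; apply: le_trans le_w (exp_loss_clip u).
Qed.

End LovaszHinge.

Theorem proposition1 (R : realType) (k : nat) (f : {set 'I_k} -> R)
    (hf : in_Fk f) (p : {ffun {ffun 'I_k -> bool} -> R})
    (hp : is_distribution p) :
  exists v : 'I_k -> R, in_V v /\
    (forall u : 'I_k -> R, exp_loss f p v <= exp_loss f p u).
Proof.
case: hf => submod_f incr_f _; case: hp => p_ge0 _.
have [w0 _ min_w0] :=
  @arg_minP _ _ _ [ffun=> ord0] xpredT (fun w => exp_loss f p (vertex R w)) isT.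
exists (vertex R w0); split; first exact: vertex_in_V.
move=> u; have [w le_w] := exists_vertex_le submod_f incr_f p_ge0 u.
exact: le_trans (min_w0 w isT) le_w.
Qed.
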